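(* Let $m,n\in\mathbb{N}$ and for $1\le\ell\le m$ let $r_{\ell},s_{\ell}$ be nonnegative integers with $s_\ell+1\ge r_\ell$, and let $a_{1,\ell},\dots,a_{r_{\ell},\ell},b_{1,\ell},\dots,b_{s_{\ell},\ell}\in\mathbb{C}$ be such that \[ \frac{(a_{1,\ell})_{N}\cdots(a_{r_{\ell},\ell})_{N}}{(b_{1,\ell})_{N}\cdots(b_{s_{\ell},\ell})_{N}}\ge0\quad\text{for all }N\in\mathbb{N}_{0}. \] Let $z_{j,\ell}\in\mathbb{C}$ ($1\le j\le n$), where if $s_{\ell}+1=r_{\ell}$ we assume $|z_{j,\ell}|<1$ for all $j$. Then the $n\times n$ matrix \[ \left(\prod_{\ell=1}^{m}{}_{r_{\ell}}F_{s_{\ell}}\left(\begin{array}{c}a_{1,\ell},\dots,a_{r_{\ell},\ell}\\ b_{1,\ell},\dots,b_{s_{\ell},\ell}\end{array}\bigg|\,z_{j,\ell}\overline{z_{k,\ell}}\right)\right)_{j,k=1}^{n} \] is positive semidefinite.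
   Context: $(a)_N=\Gamma(a+N)/\Gamma(a)=a(a+1)\cdots(a+N-1)$. For $s+1\ge r$, ${}_{r}F_{s}\left(\begin{array}{c}a_{1},\dots,a_{r}\\ b_{1},\dots,b_{s}\end{array}\big|z\right)=\sum_{N=0}^{\infty}\frac{(a_1)_N\cdots(a_r)_N}{N!\,(b_1)_N\cdots(b_s)_N}z^{N}$, for $z\in\mathbb{C}$ if $s+1>r$ and $|z|<1$ if $s+1=r$. A complex matrix $A=(a_{j,k})$ is positive semidefinite if $\sum_{j,k}a_{j,k}w_j\overline{w_k}\ge0$ for all complex $w_j$. *)

From HB Require Import structures.
From mathcomp Require Import all_boot all_order all_algebra.
From mathcomp Require Import all_classical all_reals topology normedtype sequences.
From mathcomp Require Import complex.
Set Implicit Arguments. Unset Strict Implicit. Unset Printing Implicit Defensive.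
Import Order.TTheory GRing.Theory Num.Theory.
Import numFieldTopology.Exports numFieldNormedType.Exports.
Local Open Scope ring_scope.

Definition poch (K : pzRingType) (a : K) (N : nat) : K :=
  \prod_(i < N) (a + i%:R).

Definition poch_ratio (K : fieldType) (a b : seq K) (N : nat) : K :=
  (\prod_(x <- a) poch x N) / (\prod_(x <- b) poch x N).

Definition hyp_coef (K : fieldType) (a b : seq K) (N : nat) : K :=
  poch_ratio a b N / N`!%:R.

Definition hypergeom (R : realType) (a b : seq R[i]) (z : R[i]) : R[i] :=
  (limn (series (fun N : nat => (hyp_coef a b N * z ^+ N : (R[i])^o))) : R[i]).

From HB Require Import structures.
From mathcomp Require Import all_boot all_order all_algebra.
From mathcomp Require Import all_classical all_reals topology normedtype sequences.
From mathcomp Require Import complex.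
From mathcomp Require Import lra ring.
Import Order.TTheory GRing.Theory Num.Theory.
Import numFieldTopology.Exports numFieldNormedType.Exports.
Local Open Scope ring_scope.
Local Open Scope classical_set_scope.
Import ComplexField.Normc.

(* Each factor rFs(a; b | z) = sum_N c_N z^N has nonnegative coefficients c_N.
   Its ratio |c_(N+1) / c_N| behaves like N^(r-s-1), hence tends to 0 when
   r <= s, and to 1 when r = s + 1, where |z| < 1 is assumed; the ratio test
   gives convergence.  Multiplying out the partial sums over all multi-indices
   f : 'I_m -> 'I_M turns the quadratic form into
   sum_f (prod_l c_(l, f l)) |sum_j w_j prod_l z_(j,l)^(f l)|^2 >= 0, and
   nonnegativity passes to the limit M -> oo. *)

Section NumFieldLimits.
Context {K : numFieldType}.

Lemma cvg_big_prod (I : Type) (s : seq I) (u : I -> nat -> K^o) (L : I -> K^o) :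
  (forall i, u i @ \oo --> L i) ->
  (fun M => \prod_(i <- s) u i M) @ \oo --> \prod_(i <- s) L i.
Proof.
move=> uL; elim: s => [|i s IH].
  by rewrite big_nil; under eq_fun do rewrite big_nil; exact: cvg_cst.
by rewrite big_cons; under eq_fun do rewrite big_cons; exact: cvgM.
Qed.

Lemma cvg_big_sum (I : Type) (s : seq I) (u : I -> nat -> K^o) (L : I -> K^o) :
  (forall i, u i @ \oo --> L i) ->
  (fun M => \sum_(i <- s) u i M) @ \oo --> \sum_(i <- s) L i.
Proof.
move=> uL; elim: s => [|i s IH].
  by rewrite big_nil; under eq_fun do rewrite big_nil; exact: cvg_cst.
by rewrite big_cons; under eq_fun do rewrite big_cons; exact: cvgD.
Qed.

Lemma cvgX (u : nat -> K^o) (L : K^o) k :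
  u @ \oo --> L -> (fun M => u M ^+ k) @ \oo --> L ^+ k.
Proof.
move=> uL; elim: k => [|k IH].
  by rewrite expr0; under eq_fun do rewrite expr0; exact: cvg_cst.
by rewrite exprS; under eq_fun do rewrite exprS; exact: cvgM.
Qed.

Lemma cvg_ge0 (u : nat -> K^o) (L : K^o) :
  u @ \oo --> L -> (forall M, 0 <= u M) -> 0 <= L.
Proof.
move=> uL u_ge0.
have normuE : (fun M => `|u M|) = u by apply: funext => M; rewrite ger0_norm.
have normuL : u @ \oo --> `|L| by rewrite -normuE; exact: cvg_norm.
by rewrite (cvg_unique _ uL normuL).
Qed.

End NumFieldLimits.

Lemma geometric_bound_of_ratio (R : realFieldType) (t : nat -> R) N0 q : 0 < q ->
  (forall n, (N0 <= n)%N -> t n.+1 <= q * t n) ->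
  exists K, forall n, t n <= K * q ^+ n.
Proof.
move=> q_gt0 t_ratio; set K := \sum_(k < N0.+1) `|t k| / q ^+ k; exists K => n.
have le_K k : (k <= N0)%N -> t k / q ^+ k <= K.
  move=> kN0; have q_k_ge0 : 0 <= (q ^+ k)^-1 by rewrite invr_ge0 exprn_ge0 ?ltW.
  apply: le_trans (ler_wpM2r q_k_ge0 (ler_norm _)) _.
  rewrite /K (bigD1 (Ordinal (kN0 : (k < N0.+1)%N))) //= lerDl.
  by apply: sumr_ge0 => i _; rewrite divr_ge0 ?normr_ge0 ?exprn_ge0 ?ltW.
rewrite mulrC -ler_pdivrMl ?exprn_gt0 // mulrC.
(* From N0 on, t n / q ^+ n is nonincreasing. *)
elim: n => [|n IH]; first exact: le_K.
have [/le_K //|] := leqP n.+1 N0; rewrite ltnS => N0n.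
apply: le_trans IH; rewrite exprS invfM mulrA; apply: ler_wpM2r.
  by rewrite invr_ge0 exprn_ge0 ?ltW.
by rewrite ler_pdivrMr // mulrC t_ratio.
Qed.

Section RealSeries.
Context {R : realType}.

Lemma cvgn_series_geometric_bound (v : nat -> R) (K q : R) : 0 <= q < 1 ->
  (forall n, `|v n| <= K * q ^+ n) -> cvgn (series v).
Proof.
move=> /andP[q_ge0 q_lt1] v_le.
have K_ge0 : 0 <= K by have := v_le 0%N; rewrite expr0 mulr1; apply: le_trans.
apply: (@normed_cvg _ R^o); apply: (@series_le_cvg _ _ (geometric K q)) => [n|n|n|].
- exact: normr_ge0.
- by rewrite /= mulr_ge0 // exprn_ge0.
- exact: v_le.
- by apply: is_cvg_geometric_series; rewrite ger0_norm.
Qed.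

End RealSeries.

Section ComplexSeries.
Context {R : realType}.
Local Notation C := (R[i])^o.

Lemma normc_ge0 (x : R[i]) : 0 <= normc x.
Proof. by have := normr_ge0 x; rewrite ler0c. Qed.

Lemma normc_prod (I : Type) (s : seq I) (F : I -> R[i]) :
  normc (\prod_(i <- s) F i) = \prod_(i <- s) normc (F i).
Proof. by elim: s => [|i s IH]; rewrite ?big_nil ?normc1 // !big_cons normcM IH. Qed.

Lemma normc_natr N : normc (N%:R : R[i]) = N%:R.
Proof. by apply: complexI; rewrite -[LHS]/`|N%:R : R[i]| normr_nat rmorph_nat. Qed.

Lemma Re_sum (I : Type) (s : seq I) (F : I -> R[i]) :
  complex.Re (\sum_(i <- s) F i) = \sum_(i <- s) complex.Re (F i).
Proof. exact: (@raddf_sum (Rcomplex R) R (@complex.Re R)). Qed.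

Lemma Im_sum (I : Type) (s : seq I) (F : I -> R[i]) :
  complex.Im (\sum_(i <- s) F i) = \sum_(i <- s) complex.Im (F i).
Proof. exact: (@raddf_sum (Rcomplex R) R (@complex.Im R)). Qed.

Lemma Re_le_normc (x : R[i]) : `|complex.Re x| <= normc x.
Proof. by have := normc_ge_Re x; rewrite lecR. Qed.

Lemma Im_le_normc (x : R[i]) : `|complex.Im x| <= normc x.
Proof.
case: x => a b; rewrite /normc /= -sqrtr_sqr ler_sqrt ?addr_ge0 ?sqr_ge0 //.
by rewrite lerDr sqr_ge0.
Qed.

Lemma normc_le_Re_Im (x : R[i]) : normc x <= `|complex.Re x| + `|complex.Im x|.
Proof.
case: x => a b; rewrite /normc /=.
have ab_ge0 : 0 <= `|a| + `|b| by rewrite addr_ge0.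
rewrite -(ger0_norm ab_ge0) -sqrtr_sqr ler_sqrt ?sqr_ge0 //.
rewrite -(real_normK (num_real a)) -(real_normK (num_real b)).
have := normr_ge0 a; have := normr_ge0 b; nra.
Qed.

Lemma cvgn_complex (u : nat -> C) :
  cvgn (fun n => complex.Re (u n)) -> cvgn (fun n => complex.Im (u n)) -> cvgn u.
Proof.
move=> /cvg_ex[/= a ReuL] /cvg_ex[/= b ImuL]; apply/cvg_ex; exists (Complex a b : C).
apply/cvgrPdist_lt => e e_gt0.
have e_real : complex.Im e = 0 by move: e_gt0; rewrite ltcE => /andP[/eqP].
have Re_e_gt0 : 0 < complex.Re e by move: e_gt0; rewrite ltcE => /andP[].
have e2_gt0 : 0 < complex.Re e / 2 by rewrite divr_gt0.
move/cvgrPdist_lt/(_ _ e2_gt0): ReuL => ReuL; move/cvgrPdist_lt/(_ _ e2_gt0): ImuL => ImuL.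
near=> n.
have Re_close : `|a - complex.Re (u n)| < complex.Re e / 2 by near: n.
have Im_close : `|b - complex.Im (u n)| < complex.Re e / 2 by near: n.
rewrite ltcE /= e_real eqxx /=; apply: le_lt_trans (normc_le_Re_Im _) _.
by case: (u n) Re_close Im_close => ? ? /= ? ?; lra.
Unshelve. all: by end_near.
Qed.

Lemma cvgn_series_ratio (u : nat -> C) (q : R) : 0 < q < 1 ->
  (\forall n \near \oo, normc (u n.+1) <= q * normc (u n)) -> cvgn (series u).
Proof.
move=> /andP[q_gt0 q_lt1] [N0 _ u_ratio].
have [K u_le] := @geometric_bound_of_ratio R (fun n => normc (u n)) _ _ q_gt0 u_ratio.
have q_ge0_lt1 : 0 <= q < 1 by rewrite ltW.
apply: cvgn_complex.
- have -> : (fun n => complex.Re (series u n)) = series (fun k => complex.Re (u k)).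
    by apply: funext => n; exact: Re_sum.
  apply: (cvgn_series_geometric_bound _ _ _ q_ge0_lt1) => n.
  exact: le_trans (Re_le_normc _) (u_le n).
- have -> : (fun n => complex.Im (series u n)) = series (fun k => complex.Im (u k)).
    by apply: funext => n; exact: Im_sum.
  apply: (cvgn_series_geometric_bound _ _ _ q_ge0_lt1) => n.
  exact: le_trans (Im_le_normc _) (u_le n).
Qed.

End ComplexSeries.

Lemma prodrM_const (K : comPzRingType) (I : Type) (s : seq I) (F : I -> K) c :
  \prod_(i <- s) (F i * c) = \prod_(i <- s) F i * c ^+ size s.
Proof. by rewrite big_split /= big_const_seq count_predT iter_mulr mulr1. Qed.

Section HypergeometricRatio.
Context {K : fieldType}.

Definition hyp_ratio (a b : seq K) (N : nat) : K :=
  (\prod_(x <- a) (x + N%:R)) / (\prod_(x <- b) (x + N%:R)) / N.+1%:R.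

Lemma hyp_coefS (a b : seq K) N : hyp_coef a b N.+1 = hyp_coef a b N * hyp_ratio a b N.
Proof.
rewrite /hyp_coef /poch_ratio /hyp_ratio /poch.
under eq_bigr do rewrite big_ord_recr.
under [X in _ / X / _]eq_bigr do rewrite big_ord_recr.
by rewrite !big_split /= factS natrM !invfM; ring.
Qed.

End HypergeometricRatio.

Section HypergeometricSeries.
Context {R : realType}.
Local Notation C := (R[i])^o.

Lemma cvg_normc_shift (x : R[i]) :
  (fun N => normc (x + N%:R) / N.+1%:R) @ \oo --> (1 : R^o).
Proof.
set d := normc (x - 1).
apply: (@squeeze_cvgr _ _ _ _ (fun N => 1 - d * harmonic N) (fun N => 1 + d * harmonic N)).
- apply: nearW => N; rewrite /harmonic /=.
  have xN : x + N%:R = (x - 1) + N.+1%:R by rewrite mulrS; ring.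
  have upper : normc (x + N%:R) <= d + N.+1%:R.
    by rewrite xN -(normc_natr N.+1) le_normcD.
  have lower : N.+1%:R <= normc (x + N%:R) + d.
    have := le_normcD (x + N%:R) (- (x - 1)).
    by rewrite normcN xN addrAC subrr add0r normc_natr.
  have n_neq0 : N.+1%:R != 0 :> R by rewrite pnatr_eq0.
  have -> : 1 - d / N.+1%:R = (N.+1%:R - d) / N.+1%:R by field; rewrite -mulrS.
  have -> : 1 + d / N.+1%:R = (N.+1%:R + d) / N.+1%:R by field; rewrite -mulrS.
  by rewrite !ler_pM2r ?invr_gt0 // lerBlDr lower -(addrC d) upper.
- rewrite -[X in _ --> X](subr0 1) -(mulr0 d).
  by apply: cvgB; [exact: cvg_cst | apply: cvgMl_tmp; exact: cvg_harmonic].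
- rewrite -[X in _ --> X](addr0 1) -(mulr0 d).
  by apply: cvgD; [exact: cvg_cst | apply: cvgMl_tmp; exact: cvg_harmonic].
Qed.

Lemma normc_hyp_ratioE (a b : seq R[i]) k N : (size b).+1 = (size a + k)%N ->
  normc (hyp_ratio a b N) =
    (\prod_(x <- a) (normc (x + N%:R) / N.+1%:R))
    / (\prod_(x <- b) (normc (x + N%:R) / N.+1%:R)) * N.+1%:R^-1 ^+ k.
Proof.
move=> sizeE; rewrite /hyp_ratio !normcM !normcV !normc_prod normc_natr !prodrM_const.
set A := \prod_(x <- a) _; set B := \prod_(x <- b) _; set n : R := N.+1%:R.
have n_neq0 : n != 0 by rewrite pnatr_eq0.
have nb : n ^+ size b = n ^+ size a * n ^+ k / n.
  by rewrite -exprD -sizeE exprSr mulfK.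
(* If B = 0 both sides vanish, as 0^-1 = 0. *)
have [->|B_neq0] := eqVneq B 0; first by rewrite !(invr0, mul0r, mulr0).
rewrite !exprVn nb; clearbody n; field.
by rewrite B_neq0 n_neq0 !expf_neq0.
Qed.

Lemma cvg_normc_hyp_ratio (a b : seq R[i]) : (size a <= (size b).+1)%N ->
  (fun N => normc (hyp_ratio a b N)) @ \oo --> (0 : R^o) ^+ ((size b).+1 - size a).
Proof.
move=> /subnKC sizeE; set k := (_ - _)%N in sizeE *.
under eq_fun do rewrite (normc_hyp_ratioE _ _ _ _ (esym sizeE)).
have lim : (fun N => (\prod_(x <- a) (normc (x + N%:R) / N.+1%:R))
    / (\prod_(x <- b) (normc (x + N%:R) / N.+1%:R)) * N.+1%:R^-1 ^+ k) @ \oo -->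
    (\prod_(x <- a) (1 : R^o)) / (\prod_(x <- b) (1 : R^o)) * 0 ^+ k.
  apply: cvgM; [apply: cvgM | exact: cvgX cvg_harmonic].
  - exact: cvg_big_prod cvg_normc_shift.
  - by apply: cvgV; [rewrite big1_eq oner_neq0 | exact: cvg_big_prod cvg_normc_shift].
by rewrite !big1_eq invr1 !mul1r in lim.
Qed.

Lemma cvg_hypergeom (a b : seq R[i]) (x : R[i]) : (size a <= (size b).+1)%N ->
  (size a = (size b).+1 -> `|x| < 1) ->
  series (fun N => (hyp_coef a b N * x ^+ N : C)) @ \oo --> (hypergeom a b x : C).
Proof.
move=> size_ab x_lt1.
set L := (0 : R) ^+ ((size b).+1 - size a) * normc x.
have L_ge0 : 0 <= L by rewrite mulr_ge0 ?exprn_ge0 ?normc_ge0.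
have L_lt1 : L < 1.
  rewrite /L expr0n; case: eqP => [k0|_]; last by rewrite mul0r.
  have sizeE : size a = (size b).+1 by apply/eqP; rewrite eqn_leq size_ab -subn_eq0 k0.
  (* On R[i], `|x| is (normc x)%:C. *)
  by rewrite mul1r -ltcR; exact: x_lt1 sizeE.
have ratio_lim : (fun N => normc (hyp_ratio a b N) * normc x) @ \oo --> (L : R^o).
  by apply: cvgMr_tmp; exact: cvg_normc_hyp_ratio.
have q_gt : L < (1 + L) / 2 by lra.
apply: (@cvgn_series_ratio _ _ ((1 + L) / 2)); first by apply/andP; split; lra.
apply: filterS (cvgr_lt _ ratio_lim _ q_gt) => N /= ratio_lt.
rewrite hyp_coefS exprSr mulrACA normcM mulrC.
by apply: ler_wpM2r; rewrite ?normc_ge0 // normcM ltW.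
Qed.

End HypergeometricSeries.

Section PositiveSemidefinite.
Context {K : numClosedFieldType}.

Lemma psd_sum_outer (I : finType) (n : nat) (c : I -> K) (g : I -> 'I_n -> K)
    (w : 'I_n -> K) : (forall i, 0 <= c i) ->
  0 <= \sum_(j < n) \sum_(k < n) (\sum_i c i * g i j * (g i k)^*) * w j * (w k)^*.
Proof.
move=> c_ge0.
have -> : \sum_(j < n) \sum_(k < n) (\sum_i c i * g i j * (g i k)^*) * w j * (w k)^*
    = \sum_i c i * ((\sum_(j < n) g i j * w j) * (\sum_(j < n) g i j * w j)^*).
  under eq_bigr do under eq_bigr do rewrite mulr_suml mulr_suml.
  under eq_bigr do rewrite exchange_big.
  rewrite exchange_big; apply: eq_bigr => i _.
  rewrite rmorph_sum mulr_suml mulr_sumr; apply: eq_bigr => j _.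
  rewrite mulr_sumr mulr_sumr; apply: eq_bigr => k _.
  by rewrite rmorphM; ring.
by apply: sumr_ge0 => i _; rewrite mulr_ge0 // mul_conjC_ge0.
Qed.

Lemma prod_partial_sums_expand (m M : nat) (c : 'I_m -> nat -> K) (u v : 'I_m -> K) :
  \prod_(l < m) \sum_(N < M) c l N * (u l * (v l)^*) ^+ N =
  \sum_(f : {ffun 'I_m -> 'I_M})
    (\prod_(l < m) c l (f l)) * (\prod_(l < m) u l ^+ f l) * (\prod_(l < m) v l ^+ f l)^*.
Proof.
rewrite bigA_distr_bigA /=; apply: eq_bigr => f _.
rewrite rmorph_prod -!big_split /=; apply: eq_bigr => l _.
by rewrite exprMn rmorphXn mulrA.
Qed.

Lemma psd_prod_partial_sums (m n M : nat) (c : 'I_m -> nat -> K)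
    (z : 'I_n -> 'I_m -> K) (w : 'I_n -> K) : (forall l N, 0 <= c l N) ->
  0 <= \sum_(j < n) \sum_(k < n)
         (\prod_(l < m) \sum_(N < M) c l N * (z j l * (z k l)^*) ^+ N) * w j * (w k)^*.
Proof.
move=> c_ge0; under eq_bigr do under eq_bigr do rewrite prod_partial_sums_expand.
by apply: psd_sum_outer => f; apply: prodr_ge0.
Qed.

Lemma psd_prod_power_series (m n : nat) (c : 'I_m -> nat -> K) (F : 'I_m -> K -> K)
    (z : 'I_n -> 'I_m -> K) (w : 'I_n -> K) : (forall l N, 0 <= c l N) ->
  (forall j k l, series (fun N => (c l N * (z j l * (z k l)^*) ^+ N : K^o)) @ \oo
                   --> (F l (z j l * (z k l)^*) : K^o)) ->
  0 <= \sum_(j < n) \sum_(k < n) (\prod_(l < m) F l (z j l * (z k l)^*)) * w j * (w k)^*.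
Proof.
move=> c_ge0 series_lim.
pose S l x := series (fun N => (c l N * x ^+ N : K^o)).
apply: (@cvg_ge0 _ (fun M => \sum_(j < n) \sum_(k < n)
                     (\prod_(l < m) S l (z j l * (z k l)^*) M) * w j * (w k)^*)).
- apply: cvg_big_sum => j; apply: cvg_big_sum => k.
  by apply: cvgMr_tmp; apply: cvgMr_tmp; exact: cvg_big_prod (series_lim j k).
- move=> M; rewrite /S /series /=.
  under eq_bigr do under eq_bigr do under eq_bigr do rewrite big_mkord.
  exact: psd_prod_partial_sums.
Qed.

End PositiveSemidefinite.

Theorem mainTheorem7 (R : realType) (m n : nat)
  (a b : 'I_m -> seq R[i]) (z : 'I_n -> 'I_m -> R[i]) :
  (forall l : 'I_m, (size (a l) <= (size (b l)).+1)%N) ->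
  (forall (l : 'I_m) (N : nat), 0 <= poch_ratio (a l) (b l) N) ->
  (forall (l : 'I_m) (j : 'I_n), size (a l) = (size (b l)).+1 -> `|z j l| < 1) ->
  forall w : 'I_n -> R[i],
    0 <= \sum_(j < n) \sum_(k < n)
           (\prod_(l < m) hypergeom (a l) (b l) (z j l * (z k l)^*))
             * w j * (w k)^*.
Proof.
move=> size_ab poch_ge0 z_lt1 w.
apply: (@psd_prod_power_series _ m n (fun l => hyp_coef (a l) (b l))
         (fun l => hypergeom (a l) (b l))) => [l N | j k l].
  by rewrite divr_ge0 ?ler0n.
apply: cvg_hypergeom (size_ab l) _ => sizeE.
by rewrite normrM norm_conjC mulr_ilt1 ?normr_ge0 ?z_lt1.
Qed.
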